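(* Let $n\ge 2$, $\delta\in(0,1/2)$, let $g$ be admissible with $$-\infty<\liminf_{x\downarrow 0}x g(x)\le\limsup_{x\downarrow 0}x g(x)<0,$$ and let $X$ be the market model driven by $g$ with all $\mu_i(0)\in(0,1-\delta)$. Then, almost surely, no market weight $\mu_i$ ever reaches $0$ (up to the first time some market weight reaches $1-\delta$).
   Context: Fix an integer $n\ge 2$ and $\delta\in(0,1)$. A continuous function $g:(0,1-\delta)\to\mathbb{R}$ is called admissible if $\lim_{x\uparrow 1-\delta}g(x)=+\infty$. Let $W=(W_1,\dots,W_n)$ be an $n$-dimensional standard Brownian motion on a filtered probability space whose filtration satisfies the usual conditions and is generated by $W$. The market model driven by $g$ is an $(0,\infty)^n$-valued continuous process $X(t)=(X_1(t),\dots,X_n(t))$ satisfying $$d\log X_i(t)=-g(\mu_i(t))\,dt+dW_i(t),\qquad i=1,\dots,n,$$ where $S(t)=X_1(t)+\dots+X_n(t)$ and $\mu_i(t)=X_i(t)/S(t)$ are the market weights (the equation makes sense as long as all $\mu_i(t)\in(0,1-\delta)$). *)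

From HB Require Import structures.
From mathcomp Require Import all_boot all_order all_algebra.
From mathcomp Require Import all_classical all_reals all_analysis.
Set Implicit Arguments. Unset Strict Implicit. Unset Printing Implicit Defensive.
Import Order.TTheory GRing.Theory Num.Theory.
Import numFieldNormedType.Exports.
Local Open Scope classical_set_scope.
Local Open Scope ring_scope.

Section Market.
Context (R : realType) (d : measure_display) (Omega : measurableType d)
        (P : probability Omega R).

(* An n-dimensional process: W i w t = i-th coordinate at time t of path w. *)

(* Independent Gaussian increments: for all times 0 <= t_0 < t_1 < ... < t_k,
   the family (W_i(t_{j+1}) - W_i(t_j))_{i<n, j<k} is mutually independent
   and W_i(t_{j+1}) - W_i(t_j) ~ N(0, t_{j+1} - t_j) (normal_prob takes the
   standard deviation). *)
Definition gaussian_indep_increments (n : nat) (W : 'I_n -> Omega -> R -> R) :=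
  forall (k : nat) (t : nat -> R),
    0 <= t 0%N -> (forall j : nat, (j < k)%N -> t j < t j.+1) ->
    forall A : 'I_n -> 'I_k -> set R, (forall i j, measurable (A i j)) ->
      P [set w | forall i j, A i j (W i w (t j.+1) - W i w (t j))] =
      (\prod_(i < n) \prod_(j < k)
         normal_prob 0 (Num.sqrt (t j.+1 - t j)) (A i j))%E.

Definition standard_BM (n : nat) (W : 'I_n -> Omega -> R -> R) :=
  [/\ (forall i t, 0 <= t -> measurable_fun setT (fun w => W i w t)),
      {ae P, forall w, forall i : 'I_n,
          W i w 0 = 0 /\ {within [set t | 0 <= t], continuous (W i w)}} &
      gaussian_indep_increments W].

Definition natural_gen (n : nat) (W : 'I_n -> Omega -> R -> R) (t : R)
  : set (set Omega) :=
  [set A | exists i s C, [/\ 0 <= s <= t, measurable C &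
                           A = (fun w => W i w s) @^-1` C]].

Definition augmented_natural (n : nat) (W : 'I_n -> Omega -> R -> R) (t : R)
  (A : set Omega) :=
  exists B, <<s natural_gen W t >> B /\
    exists N, [/\ measurable N, P N = 0%E & (A `\` B) `|` (B `\` A) `<=` N].

(* The filtration generated by W satisfying the usual conditions (usual
   augmentation): F_t = /\_{u > t} (sigma(W_s, s <= u) v null sets). *)
Definition BM_filtration (n : nat) (W : 'I_n -> Omega -> R -> R) (t : R)
  (A : set Omega) :=
  measurable A /\ forall u, t < u -> augmented_natural W u A.

Definition total (n : nat) (x : 'I_n -> R) := \sum_(j < n) x j.

Definition market_weight (n : nat) (x : 'I_n -> R) (i : 'I_n) := x i / total x.

(* Pathwise requirements on the market model driven by g, on the stochastic
   interval [0, zeta w): positivity, weights in (0,1-delta), continuity, the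
   integrated form of  d log X_i = - g(mu_i) dt + dW_i,  and maximality of
   the lifetime zeta (if finite, the weights approach the boundary of
   (0, 1 - delta) as t increases to zeta). *)
Definition market_path (n : nat) (delta : R) (g : R -> R)
  (W : 'I_n -> Omega -> R -> R) (X : Omega -> R -> 'I_n -> R)
  (zeta : Omega -> \bar R) (w : Omega) :=
  [/\ (0 < zeta w)%E,
      (forall t i, 0 <= t -> (t%:E < zeta w)%E ->
         0 < X w t i /\ 0 < market_weight (X w t) i < 1 - delta),
      (forall i, {within [set t | 0 <= t /\ (t%:E < zeta w)%E],
                   continuous (fun t => X w t i)}),
      (forall t i, 0 <= t -> (t%:E < zeta w)%E ->
         ln (X w t i) = ln (X w 0 i)
           - (\int[lebesgue_measure]_(s in `[0, t]) g (market_weight (X w s) i))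
           + W i w t) &
      ((zeta w < +oo)%E -> forall eps, 0 < eps -> forall s, 0 <= s ->
         (s%:E < zeta w)%E -> exists t, [/\ s < t, (t%:E < zeta w)%E &
           exists i, market_weight (X w t) i < eps \/
                     1 - delta - eps < market_weight (X w t) i])].

Definition market_model (n : nat) (delta : R) (g : R -> R)
  (W : 'I_n -> Omega -> R -> R) (X : Omega -> R -> 'I_n -> R)
  (zeta : Omega -> \bar R) :=
  [/\ (forall t, 0 <= t -> BM_filtration W t [set w | (t%:E < zeta w)%E]),
      (forall t i C, 0 <= t -> measurable C ->
         BM_filtration W t [set w | (t%:E < zeta w)%E /\ C (X w t i)]) &
      {ae P, forall w, market_path delta g W X zeta w}].

End Market.

Definition admissible (R : realType) (delta : R) (g : R -> R) :=
  {within `]0, 1 - delta[%classic, continuous g} /\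
  (g x @[x --> (1 - delta)^'-] --> +oo)%R.

From Pilot Require Import Defs.
From HB Require Import structures.
From mathcomp Require Import all_boot all_order all_algebra.
From mathcomp Require Import all_classical all_reals all_analysis.
From mathcomp Require Import ring lra.
Import Order.TTheory GRing.Theory Num.Theory.
Import numFieldNormedType.Exports.
Local Open Scope classical_set_scope.
Local Open Scope ring_scope.

(* Fix a path and an index i, and let Q = \sum_j (X_j / X_i) exp (W_i - W_j).
   On [0, T] the Brownian factors lie in [1/E, E] with E = exp (2 sup |W|), so
   Q is comparable to 1 / mu_i.  In Q the Brownian terms of the integrated
   equation cancel: Q = \sum_j (X_j(0) / X_i(0)) exp (\int g(mu_i) - \int g(mu_j))
   is differentiable, with
     Q' = \sum_j (X_j / X_i) exp (W_i - W_j) (g(mu_i) - g(mu_j)).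
   As x g(x) is bounded below on (0, 1 - delta) by -C and at most -c < 0 near 0,
   once Q is large mu_i is small and Q' <= (n C E - c Q) / mu_i < 0.  So Q,
   hence 1 / mu_i, stays bounded on [0, T]. *)

Section limf_near.
Context {R : realType} {F : set_system R} {FF : Filter F}.

Lemma limf_esup_lt_near {f : R -> R} {a : R} :
  (limf_esup (fun x => (f x)%:E) F < a%:E)%E ->
  exists2 b, b < a & \forall x \near F, f x <= b.
Proof.
rewrite limf_esupE => /ereal_inf_lt[_ [V FV <-]].
have sup_ub x : V x -> ((f x)%:E <= ereal_sup ((fun x => (f x)%:E) @` V))%E.
  by move=> Vx; apply: ereal_sup_ubound; exists x.
case: (ereal_sup _) sup_ub => [r| |] // sup_ub.
- rewrite lte_fin => ra; exists r => //.
  by apply: filterS FV => x /sup_ub; rewrite lee_fin.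
- move=> _; exists (a - 1); first by rewrite ltrBlDr ltrDl.
  by apply: filterS FV => x /sup_ub; rewrite leeNy_eq.
Qed.

Lemma limf_einf_gt_near {f : R -> R} {a : R} :
  (a%:E < limf_einf (fun x => (f x)%:E) F)%E ->
  exists2 b, a < b & \forall x \near F, b <= f x.
Proof.
rewrite /limf_einf lteNr => /(limf_esup_lt_near (f := fun x => - f x))[b ba Fb].
exists (- b); first by rewrite ltrNr.
by apply: filterS Fb => x; rewrite lerNl.
Qed.

End limf_near.

Section one_sided_nbhs.
Context {R : realType}.

Lemma nbhs_right_itv (a : R) (P : R -> Prop) :
  (\forall x \near a^'+, P x) -> exists2 e, 0 < e & forall x, a < x < a + e -> P x.
Proof.
move=> /nbhs_ballP[e /= e_gt0 aeP]; exists e => // x /andP[ax xae].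
apply: aeP => //.
by rewrite /ball /= ltr_distlC xae (lt_trans _ ax)// ltrBlDr ltrDl.
Qed.

Lemma nbhs_left_itv (b : R) (P : R -> Prop) :
  (\forall x \near b^'-, P x) -> exists2 e, 0 < e & forall x, b - e < x < b -> P x.
Proof.
move=> /nbhs_ballP[e /= e_gt0 beP]; exists e => // x /andP[bex xb].
apply: beP => //.
by rewrite /ball /= ltr_distlC bex (lt_trans xb)// ltrDl.
Qed.

Lemma bounded_above_itvoo {f : R -> R} {a b k0 k1 : R} : a < b ->
  {within `]a, b[, continuous f} ->
  (\forall x \near a^'+, f x <= k0) -> (\forall x \near b^'-, f x <= k1) ->
  exists C, forall x, a < x < b -> f x <= C.
Proof.
move=> ab f_cont /nbhs_right_itv[e0 e0_gt0 f_le_k0] /nbhs_left_itv[e1 e1_gt0 f_le_k1].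
pose m := Num.min (b - a) (Num.min e0 e1).
have m_gt0 : 0 < m by rewrite !lt_min subr_gt0 ab e0_gt0.
have [m_le_ba m_le_e0 m_le_e1] : [/\ m <= b - a, m <= e0 & m <= e1].
  by rewrite !ge_min !lexx !orbT.
have pq : a + m / 2 <= b - m / 2 by lra.
have sub : `[a + m / 2, b - m / 2] `<=` `]a, b[.
  by move=> y /=; rewrite !in_itv /= => /andP[py yq]; apply/andP; split; lra.
have [xm xm_in xm_max] := EVT_max pq (continuous_subspaceW sub f_cont).
exists (Num.max (Num.max k0 k1) (f xm)) => x /andP[ax xb].
rewrite !le_max; have [x_lt|x_ge] := ltP x (a + m / 2).
  by rewrite f_le_k0 // ax /=; lra.
have [x_gt|x_le] := ltP (b - m / 2) x.
  by rewrite f_le_k1 ?orbT // xb andbT; lra.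
by rewrite xm_max ?orbT // in_itv /= x_ge x_le.
Qed.

End one_sided_nbhs.

Lemma lte_fin_between {R : realType} {x : R} {y : \bar R} :
  (x%:E < y)%E -> exists2 u, x < u & (u%:E < y)%E.
Proof.
case: y => [r| |] // xy; last by exists (x + 1); [rewrite ltrDl | exact: ltry].
by exists ((x + r) / 2); rewrite ?lte_fin midf_lt.
Qed.

Lemma admissible_xg_bounded_below {R : realType} {delta k : R} {g : R -> R} :
  delta < 1 -> admissible delta g -> (\forall x \near 0^'+, k <= x * g x) ->
  exists2 C, 0 <= C & forall x, 0 < x < 1 - delta -> - C <= x * g x.
Proof.
move=> delta_lt1 [g_cont g_infty] xg_near0.
have delta1_gt0 : 0 < 1 - delta by rewrite subr_gt0.
have xg_cont : {within `]0, 1 - delta[, continuous (fun x => - (x * g x))}.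
  rewrite continuous_open_subspace // => x x_in.
  move: g_cont; rewrite continuous_open_subspace // => /(_ x x_in) gx_cont.
  exact: cvgN (cvgM cvg_id gx_cont).
have xg_near1 : \forall x \near (1 - delta)^'-, - (x * g x) <= 0.
  have /cvgryPge/(_ 0) g_ge0 := g_infty.
  apply: filterS2 g_ge0 (nbhs_left_gt delta1_gt0) => x g_ge0 x_gt0.
  by rewrite oppr_le0 mulr_ge0 // ltW.
have xg_near0' : \forall x \near 0^'+, - (x * g x) <= - k.
  by apply: filterS xg_near0 => x; rewrite lerNr opprK.
have [C xg_le] := bounded_above_itvoo delta1_gt0 xg_cont xg_near0' xg_near1.
exists (Num.max C 0) => [|x x_in]; first by rewrite le_max lexx orbT.
by rewrite lerNl (le_trans (xg_le x x_in))// le_max lexx.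
Qed.

Lemma le_level_of_derive_lt0 {R : realType} (f df : R -> R) (a b L : R) :
  a <= b -> {within `[a, b], continuous f} ->
  (forall t, a < t <= b -> is_derive t 1 f (df t)) ->
  (forall t, a < t <= b -> L < f t -> df t < 0) ->
  f a <= L -> f b <= L.
Proof.
move=> ab f_cont f_der df_lt0 fa_le; rewrite leNgt; apply/negP => fb_gt.
have f_cont_at t : a < t <= b -> {for t, continuous f}.
  move=> /f_der[f_derivable _].
  exact/differentiable_continuous/derivable1_diffP.
(* f would be decreasing just left of a maximum point p with f p > L. *)
have [p p_in p_max] := EVT_max ab f_cont.
have fp_gt : L < f p by rewrite (lt_le_trans fb_gt)// p_max// in_itv /= ab lexx.
have {p_in} ap_pb : a < p <= b.
  move: p_in; rewrite in_itv /= => /andP[ap ->]; rewrite andbT.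
  by rewrite lt_neqAle ap andbT; apply: contraTneq fp_gt => <-; rewrite -leNgt.
have /nbhs_left_itv[e e_gt0 f_gt_near] : \forall t \near p^'-, L < f t.
  by apply: cvg_within; exact: (cvgr_gt _ (f_cont_at p ap_pb)).
pose q := p - Num.min (p - a) e / 2.
have [m_le_pa m_le_e] : Num.min (p - a) e <= p - a /\ Num.min (p - a) e <= e.
  by rewrite !ge_min !lexx orbT.
have m_gt0 : 0 < Num.min (p - a) e by rewrite lt_min subr_gt0 (andP ap_pb).1.
have [aq qp peq] : [/\ a < q, q < p & p - e < q] by rewrite /q; split; lra.
have qp_in t : q <= t <= p -> a < t <= b.
  by case/andP: ap_pb => _ pb /andP[qt tp]; apply/andP; split; lra.
have f_cont_qp : {within `[q, p], continuous f}.
  apply: continuous_in_subspaceT => t; rewrite inE /= in_itv /=.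
  by move=> /qp_in; apply: f_cont_at.
have f_der_qp t : t \in `]q, p[ -> is_derive t 1 f (df t).
  by rewrite in_itv /= => /andP[qt tp]; apply/f_der/qp_in; rewrite !ltW.
have [xi + f_incr] := MVT qp f_der_qp f_cont_qp; rewrite in_itv /= => /andP[qxi xip].
have xi_in : a < xi <= b by apply: qp_in; rewrite !ltW.
have dxi_lt0 : df xi < 0.
  by apply: df_lt0 => //; apply: f_gt_near; apply/andP; split; lra.
have : f p - f q < 0 by rewrite f_incr nmulr_rlt0 // subr_gt0.
by rewrite subr_lt0 ltNge p_max // in_itv /= ltW //= (le_trans (ltW qp)) // (andP ap_pb).2.
Qed.

Lemma continuous_family_bounded {R : realType} {I : finType} {W : I -> R -> R}
    {a b : R} :
  a <= b -> (forall k, {within `[a, b], continuous (W k)}) ->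
  exists B, forall k t, t \in `[a, b] -> `|W k t| <= B.
Proof.
move=> ab W_cont.
have /choice[tmax tmax_max] k : exists t, forall s, s \in `[a, b] -> `|W k s| <= `|W k t|.
  have normW_cont : {within `[a, b], continuous (fun t => `|W k t|)}.
    by move=> x; apply: continuous_comp (W_cont k x) _; exact: norm_continuous.
  by have [t _ t_max] := EVT_max ab normW_cont; exists t.
exists (\sum_k `|W k (tmax k)|) => k t t_in.
rewrite (le_trans (tmax_max k t t_in))// (bigD1 k) //= lerDl.
by rewrite sumr_ge0.
Qed.

Section market_path_bound.
Context {R : realType} {n : nat} {delta : R} {g : R -> R}.
Context {W : 'I_n -> R -> R} {X : R -> 'I_n -> R} {zeta : \bar R}.

Hypothesis g_cont : {within `]0, 1 - delta[, continuous g}.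
Context {C a1 c : R}.
Hypothesis C_ge0 : 0 <= C.
Hypothesis xg_ge : forall x, 0 < x < 1 - delta -> - C <= x * g x.
Hypothesis a1_gt0 : 0 < a1.
Hypothesis c_gt0 : 0 < c.
Hypothesis xg_le : forall x, 0 < x < a1 -> x * g x <= - c.

Hypothesis W_cont : forall k, {within [set t | 0 <= t], continuous (W k)}.
Hypothesis zeta_gt0 : (0 < zeta)%E.
Hypothesis X_pos : forall t j, 0 <= t -> (t%:E < zeta)%E ->
  0 < X t j /\ 0 < market_weight (X t) j < 1 - delta.
Hypothesis X_cont : forall j,
  {within [set t | 0 <= t /\ (t%:E < zeta)%E], continuous (fun t => X t j)}.
Hypothesis ln_X : forall t j, 0 <= t -> (t%:E < zeta)%E ->
  ln (X t j) = ln (X 0 j)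
    - (\int[lebesgue_measure]_(s in `[0, t]) g (market_weight (X s) j)) + W j t.

Let alive := [set t : R | 0 <= t /\ (t%:E < zeta)%E].
Let mu j t := market_weight (X t) j.
Let G j t := \int[lebesgue_measure]_(s in `[0, t]) g (mu j s).

Lemma alive0 : alive 0.
Proof. by split. Qed.

Lemma X_gt0 j t : alive t -> 0 < X t j.
Proof. by case=> t_ge0 t_lt; case: (X_pos t j t_ge0 t_lt). Qed.

Lemma mu_gt0 j t : alive t -> 0 < mu j t.
Proof. by case=> t_ge0 t_lt; case: (X_pos t j t_ge0 t_lt) => _ /andP[]. Qed.

Lemma mu_lt j t : alive t -> mu j t < 1 - delta.
Proof. by case=> t_ge0 t_lt; case: (X_pos t j t_ge0 t_lt) => _ /andP[]. Qed.

Lemma total_gt0 (j : 'I_n) t : alive t -> 0 < Defs.total (X t).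
Proof.
move=> t_alive; rewrite (lt_le_trans (X_gt0 j t t_alive))// /Defs.total (bigD1 j) //=.
by rewrite lerDl sumr_ge0 // => k _; rewrite ltW // X_gt0.
Qed.

Lemma X_cvg j : {in alive, continuous ((fun t => X t j) : subspace alive -> R)}.
Proof. by rewrite -continuous_subspace_in; apply: X_cont. Qed.

Lemma W_cvg k : {in alive, continuous (W k : subspace alive -> R)}.
Proof.
rewrite -continuous_subspace_in.
by apply: continuous_subspaceW (W_cont k) => t [].
Qed.

Lemma mu_continuous j : {within alive, continuous (mu j)}.
Proof.
rewrite continuous_subspace_in => t t_alive; apply: cvgM; first exact: X_cvg.
have := t_alive; rewrite inE => /(total_gt0 j t) /lt0r_neq0 S_neq0.
apply: cvgV => //; apply: cvg_big => // [|k _]; first exact: add_continuous.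
exact: X_cvg.
Qed.

Lemma g_mu_continuous j : {within alive, continuous (fun s => g (mu j s))}.
Proof.
rewrite continuous_subspace_in => s s_alive.
have := mu_continuous j; rewrite continuous_subspace_in => /(_ s s_alive) mu_cont.
apply: continuous_comp mu_cont _.
move: g_cont; rewrite continuous_open_subspace //; apply.
by move: s_alive; rewrite !inE /= in_itv /= => s_alive; rewrite mu_gt0 // mu_lt.
Qed.

Lemma G_derive j t : 0 < t -> (t%:E < zeta)%E -> is_derive t 1 (G j) (g (mu j t)).
Proof.
move=> t_gt0 t_lt; have [u tu u_lt] := lte_fin_between t_lt.
have sub0u : `[0, u] `<=` alive.
  move=> s /=; rewrite in_itv /= => /andP[s_ge0 su].
  by split; rewrite // (le_lt_trans _ u_lt) ?lee_fin.
have gmu_int : lebesgue_measure.-integrable `[0, u] (EFin \o (fun s => g (mu j s))).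
  apply: continuous_compact_integrable; first exact: segment_compact.
  exact: continuous_subspaceW sub0u (g_mu_continuous j).
have gmu_cont_t : {for t, continuous (fun s => g (mu j s))}.
  have sub0u' : `]0, u[ `<=` alive.
    by move=> s /= /[!in_itv] /andP[? ?]; apply/sub0u; rewrite /= in_itv /= !ltW.
  have := continuous_subspaceW sub0u' (g_mu_continuous j).
  by rewrite continuous_open_subspace //; apply; rewrite inE /= in_itv /= t_gt0 tu.
have [G_derivable G_deriv] := continuous_FTC1_closed tu gmu_int t_gt0 gmu_cont_t.
by apply: DeriveDef; rewrite // -derive1E.
Qed.

Variable i : 'I_n.

Let ratio j t := X t j / X t i * expR (W i t - W j t).
Let Q t := \sum_j ratio j t.
Let dQ t := \sum_j ratio j t * (g (mu i t) - g (mu j t)).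

Lemma ratio_gt0 j t : alive t -> 0 < ratio j t.
Proof. by move=> t_alive; rewrite mulr_gt0 ?divr_gt0 ?X_gt0 ?expR_gt0. Qed.

Lemma ratio_integral_form j t : alive t ->
  ratio j t = X 0 j / X 0 i * expR (G i t - G j t).
Proof.
move=> [t_ge0 t_lt].
have X0E k : X 0 k = expR (ln (X 0 k)) by rewrite lnK // posrE X_gt0 // alive0.
have XtE k : X t k = expR (ln (X 0 k) - G k t + W k t).
  by rewrite -ln_X // lnK // posrE X_gt0.
by rewrite /ratio (X0E j) (X0E i) (XtE j) (XtE i) -!expRB -!expRD; congr expR; ring.
Qed.

Lemma Q_continuous : {within alive, continuous Q}.
Proof.
rewrite continuous_subspace_in => t t_alive.
apply: cvg_big => // [|j _]; first exact: add_continuous.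
apply: cvgM; first apply: cvgM; [exact: X_cvg| |].
  by apply: cvgV; [rewrite gt_eqF // X_gt0 //; rewrite inE in t_alive | exact: X_cvg].
apply: continuous_comp; first by apply: cvgB; apply: W_cvg.
exact: continuous_expR.
Qed.

Lemma Q_derive t : 0 < t -> (t%:E < zeta)%E -> is_derive t 1 Q (dQ t).
Proof.
move=> t_gt0 t_lt; have t_alive : alive t by split; rewrite ?ltW.
pose Qint := \sum_j (fun s => X 0 j / X 0 i * expR (G i s - G j s)).
pose dQint := \sum_j X 0 j / X 0 i * (expR (G i t - G j t) * (g (mu i t) - g (mu j t))).
have -> : dQ t = dQint by apply: eq_bigr => j _; rewrite ratio_integral_form ?mulrA.
have Qint_derive : is_derive t 1 Qint dQint.
  apply: is_derive_sum => j; apply: is_deriveZ; apply: is_derive1_comp.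
  exact: is_deriveB (G_derive i t t_gt0 t_lt) (G_derive j t t_gt0 t_lt).
apply: near_eq_is_derive Qint_derive.
have [u tu u_lt] := lte_fin_between t_lt.
have t_in : t \in `]0, u[ by rewrite in_itv /= t_gt0.
apply: filterS (near_in_itvoo t_in) => s; rewrite in_itv /= => /andP[s_gt0 su].
rewrite /Qint fct_sumE; apply: eq_bigr => j _; rewrite ratio_integral_form //.
by split; rewrite ?ltW // (lt_trans _ u_lt) ?lte_fin.
Qed.

Lemma Q_gt0 t : alive t -> 0 < Q t.
Proof.
move=> t_alive; rewrite (lt_le_trans (ratio_gt0 i t t_alive))// /Q (bigD1 i) //=.
by rewrite lerDl sumr_ge0 // => j _; rewrite ltW // ratio_gt0.
Qed.

Lemma inv_mu_sum t : (mu i t)^-1 = \sum_j X t j / X t i.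
Proof. by rewrite /mu /market_weight invf_div /Defs.total mulr_suml. Qed.

Section bounded_horizon.
Variables (T E : R).
Hypothesis T_ge0 : 0 <= T.
Hypothesis W_osc : forall j k t, 0 <= t <= T -> expR (W j t - W k t) <= E.

Lemma E_gt0 : 0 < E.
Proof. by rewrite (lt_le_trans (expR_gt0 (W i 0 - W i 0)))// W_osc // lexx. Qed.

Lemma inv_mu_le_Q t : alive t -> t <= T -> (mu i t)^-1 <= E * Q t.
Proof.
move=> t_alive tT; have t_in : 0 <= t <= T by case: t_alive => ->.
rewrite inv_mu_sum /Q mulr_sumr; apply: ler_sum => j _.
have -> : X t j / X t i = ratio j t * expR (W j t - W i t).
  by rewrite /ratio -mulrA -expRD (_ : _ + _ = 0) ?expR0 ?mulr1 //; ring.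
by rewrite [E * _]mulrC ler_wpM2l ?W_osc // ltW // ratio_gt0.
Qed.

Lemma Q_le_inv_mu t : alive t -> t <= T -> Q t <= E / mu i t.
Proof.
move=> t_alive tT; have t_in : 0 <= t <= T by case: t_alive => ->.
rewrite inv_mu_sum /Q mulr_sumr; apply: ler_sum => j _.
by rewrite /ratio mulrC ler_wpM2r ?W_osc // ltW // divr_gt0 ?X_gt0.
Qed.

Lemma ratio_div_mu_le j t : alive t -> t <= T -> ratio j t / mu j t <= E / mu i t.
Proof.
move=> t_alive tT; have t_in : 0 <= t <= T by case: t_alive => ->.
have -> : ratio j t / mu j t = expR (W i t - W j t) / mu i t.
  have [Xi_gt0 Xj_gt0] := (X_gt0 i t t_alive, X_gt0 j t t_alive).
  have S_gt0 := total_gt0 i t t_alive.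
  by rewrite /ratio /mu /market_weight; field; rewrite !gt_eqF.
by rewrite ler_wpM2r ?W_osc // invr_ge0 ltW // mu_gt0.
Qed.

Let M := E / a1 + n%:R * C * E / c.

Lemma M_ge0 : 0 <= M.
Proof. by rewrite /M addr_ge0 // divr_ge0 ?mulr_ge0 // ltW // E_gt0. Qed.

Lemma dQ_lt0 t : 0 < t -> t <= T -> (t%:E < zeta)%E -> M < Q t -> dQ t < 0.
Proof.
move=> t_gt0 tT t_lt M_lt_Q; have t_alive : alive t by split; rewrite ?ltW.
have mui_gt0 := mu_gt0 i t t_alive; have E_gt0 := E_gt0.
have dQE : dQ t = Q t * g (mu i t) + \sum_j ratio j t * - g (mu j t).
  by rewrite /dQ /Q mulr_suml -big_split /=; apply: eq_bigr => j _; ring.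
have term_le j : ratio j t * - g (mu j t) <= E / mu i t * C.
  have muj_gt0 := mu_gt0 j t t_alive.
  have -> : ratio j t * - g (mu j t) = ratio j t / mu j t * - (mu j t * g (mu j t)).
    by field; rewrite gt_eqF.
  have xgj_le : - (mu j t * g (mu j t)) <= C.
    by rewrite lerNl xg_ge // muj_gt0 mu_lt.
  apply: le_trans (ler_wpM2l _ xgj_le) _; first by rewrite divr_ge0 // ltW // ratio_gt0.
  by rewrite ler_wpM2r //; apply: ratio_div_mu_le.
have sum_le : \sum_j ratio j t * - g (mu j t) <= n%:R * C * E / mu i t.
  apply: le_trans (ler_sum _ (fun j _ => term_le j)) _.
  have -> : n%:R * C * E / mu i t = n%:R * (E / mu i t * C) by ring.
  by rewrite sumr_const card_ord mulr_natl.
have E_a1_le_M : E / a1 <= M by rewrite /M lerDl divr_ge0 // ?mulr_ge0 // ltW.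
have nCE_le_M : n%:R * C * E / c <= M by rewrite /M lerDr divr_ge0 // ltW.
have mui_lt : mu i t < a1.
  have : E / a1 < E / mu i t.
    exact: le_lt_trans E_a1_le_M (lt_le_trans M_lt_Q (Q_le_inv_mu t t_alive tT)).
  by rewrite ltr_pM2l // ltf_pV2.
have g_le : g (mu i t) <= - c / mu i t.
  by rewrite ler_pdivlMr // mulrC xg_le // mui_gt0.
have cQ_gt : n%:R * C * E < c * Q t.
  by rewrite [c * _]mulrC -ltr_pdivrMr //; apply: le_lt_trans nCE_le_M M_lt_Q.
rewrite dQE; apply: le_lt_trans (lerD (ler_wpM2l (ltW (Q_gt0 t t_alive)) g_le) sum_le) _.
have -> : Q t * (- c / mu i t) + n%:R * C * E / mu i t = (n%:R * C * E - c * Q t) / mu i t.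
  by ring.
by rewrite pmulr_llt0 ?invr_gt0 // subr_lt0.
Qed.

Lemma Q_le_level t : alive t -> t <= T -> Q t <= Q 0 + M.
Proof.
move=> [t_ge0 t_lt] tT.
have alive_s s : 0 <= s <= t -> alive s.
  by move=> /andP[s_ge0 st]; split; rewrite // (le_lt_trans _ t_lt) ?lee_fin.
apply: (le_level_of_derive_lt0 Q dQ) t_ge0 _ _ _ _.
- apply: continuous_subspaceW Q_continuous => s /=; rewrite in_itv /=; exact: alive_s.
- move=> s /andP[s_gt0 st]; apply: Q_derive s_gt0 _.
  by rewrite (le_lt_trans _ t_lt) ?lee_fin.
- move=> s /andP[s_gt0 st] Q_gt; apply: dQ_lt0; rewrite ?(le_trans st) //.
    by rewrite (le_lt_trans _ t_lt) ?lee_fin.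
  by rewrite (le_lt_trans _ Q_gt) // lerDr ltW // Q_gt0 // alive0.
- by rewrite lerDl M_ge0.
Qed.

End bounded_horizon.

Lemma market_weight_bounded_below T : 0 <= T -> exists eps, 0 < eps /\
  forall t, 0 <= t <= T -> (t%:E < zeta)%E -> eps <= market_weight (X t) i.
Proof.
move=> T_ge0.
have W_cont_T k : {within `[0, T], continuous (W k)}.
  by apply: continuous_subspaceW (W_cont k) => t /=; rewrite in_itv /= => /andP[].
have [B W_le] := continuous_family_bounded T_ge0 W_cont_T.
pose E := expR (B + B).
have W_osc j k t : 0 <= t <= T -> expR (W j t - W k t) <= E.
  move=> t_in; have t_in' : t \in `[0, T] by rewrite in_itv.
  have := W_le j t t_in'; have := W_le k t t_in'.
  have := ler_norm (W j t); have := ler_norm (- W k t); rewrite normrN ler_expR.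
  lra.
pose M := E / a1 + n%:R * C * E / c.
have E_gt0 : 0 < E := expR_gt0 _.
have QM_gt0 : 0 < Q 0 + M.
  by rewrite ltr_wpDr ?(M_ge0 T E T_ge0 W_osc) ?(Q_gt0 0 alive0).
have EQM_gt0 : 0 < E * (Q 0 + M) by rewrite mulr_gt0.
exists (E * (Q 0 + M))^-1; split => [|t /andP[t_ge0 tT] t_lt]; first by rewrite invr_gt0.
have t_alive : alive t by [].
have mu_t_gt0 := mu_gt0 i t t_alive.
rewrite -[market_weight _ _]invrK lef_pV2 ?posrE ?invr_gt0 //.
apply: le_trans (inv_mu_le_Q T E W_osc t t_alive tT) _.
by rewrite ler_pM2l // (Q_le_level T E T_ge0 W_osc t t_alive tT).
Qed.

End market_path_bound.

Theorem mainTheorem8 (R : realType) (d : measure_display)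
  (Omega : measurableType d) (P : probability Omega R)
  (n : nat) (delta : R) (g : R -> R)
  (W : 'I_n -> Omega -> R -> R) (X : Omega -> R -> 'I_n -> R)
  (zeta : Omega -> \bar R) :
  (2 <= n)%N ->
  0 < delta < 1 / 2 ->
  admissible delta g ->
  (-oo < limf_einf (fun x : R => (x * g x)%:E) (0%R^'+))%E ->
  (limf_einf (fun x : R => (x * g x)%:E) (0%R^'+)
     <= limf_esup (fun x : R => (x * g x)%:E) (0%R^'+))%E ->
  (limf_esup (fun x : R => (x * g x)%:E) (0%R^'+) < 0)%E ->
  standard_BM P W ->
  market_model P delta g W X zeta ->
  {ae P, forall w, forall i, 0 < market_weight (X w 0) i < 1 - delta} ->
  {ae P, forall w, forall (i : 'I_n) (T : R), 0 <= T ->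
     exists eps, 0 < eps /\
       forall t, 0 <= t <= T -> (t%:E < zeta w)%E ->
         eps <= market_weight (X w t) i}.
Proof.
move=> _ /andP[_ delta_lt] adm einf_gt _ esup_lt0 [_ BM_ae _] [_ _ market_ae] _.
have [b b_lt0 /nbhs_right_itv[a1 a1_gt0 xg_le_b]] := limf_esup_lt_near esup_lt0.
have xg_le x : 0 < x < a1 -> x * g x <= - (- b).
  by rewrite opprK -[a1]add0r; apply: xg_le_b.
have [k k_lt] : exists k, (k%:E < limf_einf (fun x : R => (x * g x)%:E) 0^'+)%E.
  case: (limf_einf _ _) einf_gt => [r _| _ |//]; last by exists 0; exact: ltey.
  by exists (r - 1); rewrite lte_fin ltrBlDr ltrDl.
have [k' _ xg_ge_near] := limf_einf_gt_near k_lt.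
have delta_lt1 : delta < 1 by rewrite (lt_trans delta_lt)// ltr_pdivrMr // mul1r ltr1n.
have [C C_ge0 xg_ge] := admissible_xg_bounded_below delta_lt1 adm xg_ge_near.
apply: filterS2 BM_ae market_ae => w BMw [zeta_gt0 X_pos X_cont ln_X _] i T T_ge0.
have c_gt0 : 0 < - b by rewrite oppr_gt0.
exact: (market_weight_bounded_below adm.1 C_ge0 xg_ge a1_gt0 c_gt0 xg_le
  (fun k => (BMw k).2) zeta_gt0 X_pos X_cont ln_X i T T_ge0).
Qed.
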